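(* For every Tychonoff space $X$, the following are equivalent: (1) $C_p(X)\models S_1(\Gamma_f,\Gamma_f)$ for every $f\in C_p(X)$; (2) $X\models S_1(\Gamma_F,\Gamma)$.
   Context: All spaces are Tychonoff; $C_p(X)$ is $C(X)$ with pointwise convergence topology. For $y$ in a space $Y$: $\Gamma_y=\{A\subseteq Y: A$ infinite, $y\notin A$, every neighbourhood of $y$ contains all but finitely many points of $A\}$. Zero-set: $g^{-1}(0)$, $g\in C(X)$; cozero-set: its complement. A cover $\mathcal U$ of $X$ always means $X=\bigcup\mathcal U$, $X\notin\mathcal U$; $\gamma$-cover: infinite, each point in all but finitely many members. $\Gamma$: open $\gamma$-covers. $\Gamma_F$: $\gamma$-covers $\mathcal U$ of $X$ by cozero-sets for which there are zero-sets $F(U)\subseteq U$ ($U\in\mathcal U$) with $\{F(U):U\in\mathcal U\}$ a $\gamma$-cover of $X$. $S_1(\mathcal A,\mathcal B)$: for every sequence $(A_n)$ from $\mathcal A$ there are $b_n\in A_n$ with $\{b_n:n\in\omega\}\in\mathcal B$. *)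

From Stdlib Require Import Reals Rtopology List.
Open Scope R_scope.

Record topology (X : Type) := Topology {
  is_open : (X -> Prop) -> Prop;
  open_full : is_open (fun _ => True);
  open_empty : is_open (fun _ => False);
  open_union : forall F : (X -> Prop) -> Prop,
      (forall U, F U -> is_open U) -> is_open (fun x => exists U, F U /\ U x);
  open_inter : forall U V, is_open U -> is_open V -> is_open (fun x => U x /\ V x)
}.
Arguments is_open {X} t U.

Definition is_closed {X : Type} (T : topology X) (C : X -> Prop) : Prop :=
  is_open T (fun x => ~ C x).

Definition continuous {X : Type} (T : topology X) (f : X -> R) : Prop :=
  forall V : R -> Prop, open_set V -> is_open T (fun x => V (f x)).

Definition tychonoff {X : Type} (T : topology X) : Prop :=
  (forall x y : X, x <> y -> exists U, is_open T U /\ U x /\ ~ U y) /\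
  (forall (C : X -> Prop) (x : X), is_closed T C -> ~ C x ->
     exists f : X -> R, continuous T f /\ f x = 0 /\
       (forall y, C y -> f y = 1) /\ (forall y, 0 <= f y <= 1)).

Definition finite_set {A : Type} (S : A -> Prop) : Prop :=
  exists l : list A, forall a, S a -> In a l.
Definition infinite_set {A : Type} (S : A -> Prop) : Prop := ~ finite_set S.

(* Points of C_p(X) are the continuous f : X -> R; subsets of C_p(X) are
   predicates on X -> R (values at non-continuous functions are irrelevant). *)

Definition cp_basic {X : Type} (f : X -> R) (F : list X) (eps : R) (g : X -> R) : Prop :=
  forall x, In x F -> Rabs (g x - f x) < eps.

Definition cp_open {X : Type} (T : topology X) (O : (X -> R) -> Prop) : Prop :=
  forall f, continuous T f -> O f ->
    exists (F : list X) (eps : R), 0 < eps /\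
      forall g, continuous T g -> cp_basic f F eps g -> O g.

Definition cp_nbhd {X : Type} (T : topology X) (f : X -> R) (N : (X -> R) -> Prop) : Prop :=
  exists O, cp_open T O /\ O f /\ (forall g, continuous T g -> O g -> N g).

Definition Gamma_pt {X : Type} (T : topology X) (f : X -> R) (A : (X -> R) -> Prop) : Prop :=
  (forall g, A g -> continuous T g) /\
  infinite_set A /\ ~ A f /\
  (forall N, cp_nbhd T f N -> finite_set (fun g => A g /\ ~ N g)).

Definition Cp_S1_Gamma_pt {X : Type} (T : topology X) (f : X -> R) : Prop :=
  forall A : nat -> (X -> R) -> Prop,
    (forall n, Gamma_pt T f (A n)) ->
    exists b : nat -> (X -> R), (forall n, A n (b n)) /\
      Gamma_pt T f (fun g => exists n, g = b n).

Definition zero_set {X : Type} (T : topology X) (Z : X -> Prop) : Prop :=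
  exists g, continuous T g /\ forall x, Z x <-> g x = 0.
Definition cozero_set {X : Type} (T : topology X) (U : X -> Prop) : Prop :=
  exists g, continuous T g /\ forall x, U x <-> g x <> 0.

Definition is_cover {X : Type} (C : (X -> Prop) -> Prop) : Prop :=
  (forall x, exists U, C U /\ U x) /\
  (forall U, C U -> exists x, ~ U x).

Definition gamma_cover {X : Type} (C : (X -> Prop) -> Prop) : Prop :=
  is_cover C /\ infinite_set C /\
  (forall x, finite_set (fun U => C U /\ ~ U x)).

Definition Gamma_open {X : Type} (T : topology X) (C : (X -> Prop) -> Prop) : Prop :=
  gamma_cover C /\ (forall U, C U -> is_open T U).

Definition Gamma_F {X : Type} (T : topology X) (C : (X -> Prop) -> Prop) : Prop :=
  gamma_cover C /\ (forall U, C U -> cozero_set T U) /\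
  exists F : (X -> Prop) -> (X -> Prop),
    (forall U, C U -> zero_set T (F U) /\ (forall x, F U x -> U x)) /\
    gamma_cover (fun Z => exists U, C U /\ Z = F U).

Definition S1_GammaF_Gamma {X : Type} (T : topology X) : Prop :=
  forall C : nat -> (X -> Prop) -> Prop,
    (forall n, Gamma_F T (C n)) ->
    exists U : nat -> (X -> Prop), (forall n, C n (U n)) /\
      Gamma_open T (fun V => exists n, V = U n).

From Stdlib Require Import Reals Rtopology Ranalysis_reg List Cantor FinFun
  ClassicalEpsilon FunctionalExtensionality PropExtensionality Classical Lia Lra.
Open Scope R_scope.

(* (2) => (1): given [A n] converging to [f], fix radii [r n -> 0].  If some
   [g] in [A n] is uniformly [r n]-close to [f], take it; otherwise the tubes
   [{|g - f| < r n}], [g] in [A n], form a Gamma_F-cover shrunk by the closed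
   tubes of radius [r n / 2].  After making these covers pairwise disjoint,
   S_1(Gamma_F, Gamma) selects one tube per index, and distinct tubes forming
   a gamma-cover eventually contain every point, i.e. the selected functions
   converge pointwise to [f].
   (1) => (2): for [U] in a Gamma_F-cover with shrinking zero-set [Z], the
   function [|z| / (|z| + |c|)] vanishes exactly on [Z] and is [< 1] exactly
   on [U]; one such function per [Z] gives a sequence in Gamma_0 of C_p(X),
   and a selection converging to [0] yields a gamma-cover by the sets
   [{h < 1}]. *)

Lemma pred_ext {A : Type} (P Q : A -> Prop) : (forall a, P a <-> Q a) -> P = Q.
Proof.
  intros H; apply functional_extensionality; intro a; apply propositional_extensionality, H.
Qed.

Section FiniteSets.
Context {A : Type}.

Lemma infinite_set_not_in (P : A -> Prop) (l : list A) :
  infinite_set P -> exists a, P a /\ ~ In a l.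
Proof.
  intros Hinf. apply NNPP; intro Hno. apply Hinf. exists l. intros a Pa.
  apply NNPP; intro; apply Hno; eauto.
Qed.

Lemma finite_set_sub (P Q : A -> Prop) :
  (forall a, P a -> Q a) -> finite_set Q -> finite_set P.
Proof. intros H [l Hl]; exists l; auto. Qed.

Lemma finite_set_image {B : Type} (P : A -> Prop) (Q : B -> Prop) (f : A -> B) :
  finite_set P -> (forall b, Q b -> exists a, P a /\ b = f a) -> finite_set Q.
Proof.
  intros [l Hl] H. exists (map f l). intros b Qb.
  destruct (H b Qb) as [a [Pa ->]]. apply in_map; auto.
Qed.

Lemma finite_set_union_list {B : Type} (l : list A) (P : A -> B -> Prop) :
  (forall a, In a l -> finite_set (P a)) -> finite_set (fun b => exists a, In a l /\ P a b).
Proof.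
  induction l as [|a l IH]; intros H.
  - exists nil. intros b [a [[] _]].
  - destruct (H a (or_introl eq_refl)) as [l1 H1].
    destruct IH as [l2 H2]; [intros; apply H; right; auto|].
    exists (l1 ++ l2). intros b [a' [[<-|Ha'] Pb]]; apply in_or_app; [left; auto|right].
    apply H2; eauto.
Qed.

Lemma infinite_set_of_injective (P : A -> Prop) (u : nat -> A) :
  (forall k, P (u k)) -> (forall k k', u k = u k' -> k = k') -> infinite_set P.
Proof.
  intros Hu Hinj [l Hl].
  set (s := map u (seq 0 (S (length l)))).
  assert (Hnd : NoDup s) by (apply Injective_map_NoDup; [exact Hinj|apply seq_NoDup]).
  assert (Hincl : incl s l).
  { intros a Ha. apply in_map_iff in Ha. destruct Ha as [k [<- _]]. apply Hl, Hu. }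
  pose proof (NoDup_incl_length Hnd Hincl) as Hlen.
  unfold s in Hlen. rewrite length_map, length_seq in Hlen. lia.
Qed.

Lemma eventually_forall_in (l : list A) (P : A -> nat -> Prop) :
  (forall a, In a l -> exists N, forall n, (N <= n)%nat -> P a n) ->
  exists N, forall a n, In a l -> (N <= n)%nat -> P a n.
Proof.
  induction l as [|a l IH]; intros H.
  - exists 0%nat. intros b n [].
  - destruct (H a (or_introl eq_refl)) as [N1 H1].
    destruct IH as [N2 H2]; [intros; apply H; right; auto|].
    exists (Nat.max N1 N2). intros b n [<-|Hb] Hn; [apply H1|apply H2]; auto; lia.
Qed.

End FiniteSets.

Section SetFamilies.
Context {X : Type}.

Lemma finite_family_missing_points (F : (X -> Prop) -> Prop) :
  finite_set F -> (forall V, F V -> exists x, ~ V x) ->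
  exists pts, forall V, F V -> exists x, In x pts /\ ~ V x.
Proof.
  intros [l Hl] Hmiss.
  assert (Hlist : exists pts, forall V, In V l -> F V -> exists x, In x pts /\ ~ V x).
  { clear Hl. induction l as [|a l IH].
    - exists nil. intros V [].
    - destruct IH as [pts Hpts].
      destruct (classic (F a)) as [Fa|Fa].
      + destruct (Hmiss a Fa) as [x Nx]. exists (x :: pts). intros V [<-|HV] FV.
        * exists x; split; [left|]; auto.
        * destruct (Hpts V HV FV) as [y [Hy Ny]]. exists y; split; [right|]; auto.
      + exists pts. intros V [<-|HV] FV; [contradiction|auto]. }
  destruct Hlist as [pts Hpts]. exists pts. intros V FV. apply Hpts; auto.
Qed.

Lemma member_containing (F : (X -> Prop) -> Prop) (x : X) :
  infinite_set F -> finite_set (fun V => F V /\ ~ V x) -> exists V, F V /\ V x.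
Proof.
  intros Hinf [l Hl]. destruct (infinite_set_not_in F l Hinf) as [V [FV NV]].
  exists V; split; auto. apply NNPP; intro; apply NV, Hl; auto.
Qed.

Lemma gamma_cover_sub (C C' : (X -> Prop) -> Prop) :
  gamma_cover C -> (forall V, C' V -> C V) -> infinite_set C' -> gamma_cover C'.
Proof.
  intros [[_ Hproper] [_ Hfin]] Hsub Hinf.
  assert (Hfin' : forall x, finite_set (fun V => C' V /\ ~ V x)).
  { intro x. apply (finite_set_sub _ _ (fun V (H : C' V /\ ~ V x) => conj (Hsub V (proj1 H)) (proj2 H)) (Hfin x)). }
  split; [split|split]; auto.
  intro x. apply member_containing; auto.
Qed.

(* Injectivity matters: a single set missing [x] could otherwise be selected
   infinitely often. *)
Lemma eventually_in_of_gamma_cover (U : nat -> X -> Prop) :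
  gamma_cover (fun V => exists n, V = U n) -> (forall n m, U n = U m -> n = m) ->
  forall x, exists N, forall n, (N <= n)%nat -> U n x.
Proof.
  intros [_ [_ Hfin]] Hinj x. destruct (Hfin x) as [l Hl].
  destruct (eventually_forall_in l (fun V n => U n <> V)) as [K HK].
  { intros V _. destruct (classic (exists m, U m = V)) as [[m <-]|Hno].
    - exists (S m). intros n Hn E. apply Hinj in E. lia.
    - exists 0%nat. intros n _ E. apply Hno; eauto. }
  exists K. intros n Hn. apply NNPP; intro Nx.
  apply (HK (U n) n); auto. apply Hl. eauto.
Qed.

End SetFamilies.

Section PointwiseContinuity.
Context {X : Type} (T : topology X).

Definition continuous_at (h : X -> R) (x : X) : Prop :=
  forall e, 0 < e -> exists U, is_open T U /\ U x /\ forall y, U y -> Rabs (h y - h x) < e.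

Lemma open_of_locally_open (S : X -> Prop) :
  (forall x, S x -> exists U, is_open T U /\ U x /\ forall y, U y -> S y) -> is_open T S.
Proof.
  intros H.
  replace S with (fun x => exists U, (is_open T U /\ forall y, U y -> S y) /\ U x).
  - apply open_union. intros U [HU _]; exact HU.
  - apply pred_ext; intro x; split.
    + intros [U [[_ HUS] Ux]]; auto.
    + intros Sx. destruct (H x Sx) as [U [HU [Ux HUS]]]. eauto.
Qed.

Lemma continuousP (h : X -> R) : continuous T h <-> forall x, continuous_at h x.
Proof.
  split.
  - intros Hh x e He. exists (fun y => disc (h x) (mkposreal e He) (h y)). split; [|split].
    + apply Hh, disc_P1.
    + unfold disc; simpl. rewrite Rminus_diag, Rabs_R0; exact He.
    + intros y Hy; exact Hy.
  - intros Hc V HV. apply open_of_locally_open. intros x Vx.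
    destruct (HV _ Vx) as [del Hdel].
    destruct (Hc x del (cond_pos del)) as [U [HU [Ux HUy]]].
    exists U; repeat split; auto. intros y Uy. apply Hdel, HUy, Uy.
Qed.

Lemma continuous_at_ext (h k : X -> R) (x : X) :
  (forall y, h y = k y) -> continuous_at h x -> continuous_at k x.
Proof.
  intros E H e He. destruct (H e He) as [U [HU [Ux HUy]]].
  exists U; repeat split; auto. intros y Uy. rewrite <- !E. auto.
Qed.

Lemma continuous_at_comp (h : X -> R) (phi : R -> R) (x : X) :
  continuous_at h x -> continuity_pt phi (h x) -> continuous_at (fun y => phi (h y)) x.
Proof.
  intros Hh Hphi e He.
  destruct (Hphi e He) as [a [Ha Hpa]].
  destruct (Hh a Ha) as [U [HU [Ux HUy]]].
  exists U; repeat split; auto. intros y Uy.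
  destruct (Req_dec (h y) (h x)) as [E|E].
  - rewrite E, Rminus_diag, Rabs_R0; exact He.
  - apply (Hpa (h y)). split; [split; [exact I|auto]|]. simpl; unfold Rdist; auto.
Qed.

Lemma continuous_at_plus (h k : X -> R) (x : X) :
  continuous_at h x -> continuous_at k x -> continuous_at (fun y => h y + k y) x.
Proof.
  intros Hh Hk e He.
  destruct (Hh (e / 2) ltac:(lra)) as [U [HU [Ux HUy]]].
  destruct (Hk (e / 2) ltac:(lra)) as [V [HV [Vx HVy]]].
  exists (fun y => U y /\ V y). repeat split; auto; [apply open_inter; auto|].
  intros y [Uy Vy]. specialize (HUy y Uy). specialize (HVy y Vy).
  replace (h y + k y - (h x + k x)) with ((h y - h x) + (k y - k x)) by ring.
  eapply Rle_lt_trans; [apply Rabs_triang|]. lra.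
Qed.

Lemma continuous_at_mult (h k : X -> R) (x : X) :
  continuous_at h x -> continuous_at k x -> continuous_at (fun y => h y * k y) x.
Proof.
  intros Hh Hk.
  assert (Hsq : forall u, continuous_at u x -> continuous_at (fun y => / 4 * (u y * u y)) x).
  { intros u Hu. apply (continuous_at_comp u (fun t => / 4 * (t * t))); [exact Hu|reg]. }
  assert (Hopp : forall u, continuous_at u x -> continuous_at (fun y => - u y) x).
  { intros u Hu. apply (continuous_at_comp u Ropp); [exact Hu|reg]. }
  (* polarization: h k = ((h + k)^2 - (h - k)^2) / 4 *)
  apply (continuous_at_ext
    (fun y => / 4 * ((h y + k y) * (h y + k y)) + - (/ 4 * ((h y + - k y) * (h y + - k y))))).
  { intro y; field. }
  apply continuous_at_plus; [|apply Hopp]; apply Hsq, continuous_at_plus; auto.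
Qed.

Lemma continuous_at_inv (h : X -> R) (x : X) :
  continuous_at h x -> h x <> 0 -> continuous_at (fun y => / h y) x.
Proof.
  intros Hh Hx. apply (continuous_at_comp h Rinv); [exact Hh|].
  apply (continuity_pt_inv (fun t => t)); [reg|exact Hx].
Qed.

Lemma continuous_const (c : R) : continuous T (fun _ => c).
Proof.
  apply continuousP. intros x e He. exists (fun _ => True).
  repeat split; [apply open_full|]. intros; rewrite Rminus_diag, Rabs_R0; exact He.
Qed.

Lemma continuous_comp (h : X -> R) (phi : R -> R) :
  continuous T h -> continuity phi -> continuous T (fun x => phi (h x)).
Proof. intros Hh Hphi V HV. exact (Hh _ (proj1 (continuity_P3 phi) Hphi V HV)). Qed.

Lemma continuous_plus (h k : X -> R) :
  continuous T h -> continuous T k -> continuous T (fun x => h x + k x).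
Proof.
  rewrite !continuousP. intros Hh Hk x. apply continuous_at_plus; auto.
Qed.

Lemma continuous_dist (f g : X -> R) :
  continuous T f -> continuous T g -> continuous T (fun x => Rabs (g x - f x)).
Proof.
  intros Hf Hg. apply (continuous_comp (fun x => g x - f x) Rabs); [|exact Rcontinuity_abs].
  apply (continuous_plus g (fun x => - f x)); [exact Hg|].
  apply (continuous_comp f Ropp); [exact Hf|reg].
Qed.

End PointwiseContinuity.

Section ZeroSets.
Context {X : Type} (T : topology X).

Lemma cozero_open (U : X -> Prop) : cozero_set T U -> is_open T U.
Proof.
  intros [g [Hg HU]].
  replace U with (fun x => (fun r => r <> 0) (g x)) by (apply pred_ext; intro x; rewrite HU; tauto).
  apply (Hg (fun r => r <> 0)). intros r Hr.
  assert (Hpos : 0 < Rabs r) by (apply Rabs_pos_lt; auto).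
  exists (mkposreal _ Hpos). intros y Hy. unfold disc in Hy; simpl in Hy.
  intro E; subst. rewrite Rminus_0_l, Rabs_Ropp in Hy. lra.
Qed.

Lemma plus_Rabs_eq0 (t : R) : t + Rabs t = 0 <-> t <= 0.
Proof.
  destruct (Rle_or_lt t 0) as [H|H].
  - rewrite Rabs_left1 by auto. split; intros; [auto|ring].
  - rewrite Rabs_right by lra. split; intros; lra.
Qed.

Lemma cozero_set_lt (d : X -> R) (r : R) :
  continuous T d -> cozero_set T (fun x => d x < r).
Proof.
  intros Hd. exists (fun x => (r - d x) + Rabs (r - d x)). split.
  - apply (continuous_comp T d (fun t => (r - t) + Rabs (r - t))); [exact Hd|reg].
  - intro x. rewrite plus_Rabs_eq0. lra.
Qed.

Lemma zero_set_le (d : X -> R) (s : R) :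
  continuous T d -> zero_set T (fun x => d x <= s).
Proof.
  intros Hd. exists (fun x => (d x - s) + Rabs (d x - s)). split.
  - apply (continuous_comp T d (fun t => (t - s) + Rabs (t - s))); [exact Hd|reg].
  - intro x. rewrite plus_Rabs_eq0. lra.
Qed.

Definition separating (Z U : X -> Prop) (h : X -> R) : Prop :=
  continuous T h /\ (forall x, h x = 0 <-> Z x) /\ (forall x, h x < 1 <-> U x).

Lemma separating_exists (Z U : X -> Prop) :
  zero_set T Z -> cozero_set T U -> (forall x, Z x -> U x) -> exists h, separating Z U h.
Proof.
  intros [z [Hz HZ]] [c [Hc HU]] HZU.
  assert (Hden : forall x, 0 < Rabs (z x) + Rabs (c x)).
  { intro x. pose proof (Rabs_pos (z x)). pose proof (Rabs_pos (c x)).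
    destruct (Req_dec (z x) 0) as [E|E].
    - assert (Hcx : c x <> 0) by (apply HU, HZU, HZ, E).
      pose proof (Rabs_pos_lt _ Hcx). lra.
    - pose proof (Rabs_pos_lt _ E). lra. }
  exists (fun x => Rabs (z x) / (Rabs (z x) + Rabs (c x))). split; [|split].
  - apply continuousP. intro x. unfold Rdiv.
    apply (continuous_at_mult T (fun y => Rabs (z y))
                              (fun y => / (Rabs (z y) + Rabs (c y)))).
    + apply continuous_at_comp; [apply continuousP, Hz|apply Rcontinuity_abs].
    + apply (continuous_at_inv T (fun y => Rabs (z y) + Rabs (c y))).
      * apply continuous_at_plus; apply continuous_at_comp;
          solve [apply continuousP; auto | apply Rcontinuity_abs].
      * specialize (Hden x). lra.
  - intro x. rewrite HZ. specialize (Hden x).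
    set (q := Rabs (z x) / (Rabs (z x) + Rabs (c x))).
    assert (Hq : q * (Rabs (z x) + Rabs (c x)) = Rabs (z x)) by (unfold q; field; lra).
    split; intro E.
    + apply NNPP; intro Nz. apply (Rabs_no_R0 _ Nz). rewrite <- Hq, E. ring.
    + rewrite <- Hq, E, Rabs_R0 in *. nra.
  - intro x. rewrite HU. specialize (Hden x). pose proof (Rabs_pos (c x)).
    set (q := Rabs (z x) / (Rabs (z x) + Rabs (c x))).
    assert (Hq : q * (Rabs (z x) + Rabs (c x)) = Rabs (z x)) by (unfold q; field; lra).
    split; intro E.
    + intro Ec. rewrite Ec, Rabs_R0 in *. nra.
    + pose proof (Rabs_pos_lt _ E). nra.
Qed.

End ZeroSets.

Section CpNeighbourhoods.
Context {X : Type} (T : topology X).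

Lemma cp_basic_margin (f g : X -> R) (L : list X) (eps : R) :
  cp_basic f L eps g -> exists e, 0 < e /\ forall x, In x L -> Rabs (g x - f x) + e <= eps.
Proof.
  induction L as [|a L IH]; intros H.
  - exists 1; split; [lra|intros x []].
  - destruct IH as [e [He He']]; [intros x Hx; apply H; right; auto|].
    assert (Ha := H a (or_introl eq_refl)).
    exists (Rmin e (eps - Rabs (g a - f a))). split; [apply Rmin_pos; lra|].
    pose proof (Rmin_l e (eps - Rabs (g a - f a))).
    pose proof (Rmin_r e (eps - Rabs (g a - f a))).
    intros x [<-|Hx]; [lra|]. specialize (He' x Hx). lra.
Qed.

Lemma cp_basic_nbhd (f : X -> R) (L : list X) (eps : R) :
  0 < eps -> cp_nbhd T f (cp_basic f L eps).
Proof.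
  intros He. exists (cp_basic f L eps). split; [|split; [|auto]].
  - intros g _ Bg. destruct (cp_basic_margin f g L eps Bg) as [e [He0 He1]].
    exists L, e. split; auto. intros h _ Bh x Hx.
    specialize (Bh x Hx). specialize (He1 x Hx).
    replace (h x - f x) with ((h x - g x) + (g x - f x)) by ring.
    eapply Rle_lt_trans; [apply Rabs_triang|]. lra.
  - intros x _. rewrite Rminus_diag, Rabs_R0; auto.
Qed.

Lemma cp_nbhd_basic (f : X -> R) (N : (X -> R) -> Prop) :
  continuous T f -> cp_nbhd T f N ->
  exists L eps, 0 < eps /\ forall g, continuous T g -> cp_basic f L eps g -> N g.
Proof.
  intros Hf [O [HO [Of HON]]]. destruct (HO f Hf Of) as [L [eps [He H]]].
  exists L, eps; split; auto.
Qed.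

Lemma Gamma_pt_almost_near (f : X -> R) (A : (X -> R) -> Prop) (L : list X) (e : R) :
  0 < e -> Gamma_pt T f A -> finite_set (fun g => A g /\ ~ cp_basic f L e g).
Proof. intros He [_ [_ [_ H]]]. apply H, cp_basic_nbhd, He. Qed.

Lemma gamma_cover_of_Gamma_pt (f : X -> R) (A A' : (X -> R) -> Prop)
    (P : (X -> R) -> X -> Prop) (e : R) :
  0 < e -> Gamma_pt T f A ->
  (forall g x, Rabs (g x - f x) < e -> P g x) ->
  (forall g, A g -> exists x, ~ P g x) ->
  (forall g, A' g -> A g) -> infinite_set A' ->
  gamma_cover (fun V => exists g, A' g /\ V = P g).
Proof.
  intros He HA HP Hmiss Hsub Hinf.
  assert (Hfin : forall x, finite_set (fun V => (exists g, A' g /\ V = P g) /\ ~ V x)).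
  { intro x. apply (finite_set_image _ _ P (Gamma_pt_almost_near f A (x :: nil) e He HA)).
    intros V [[g [Ag ->]] Nx]. exists g. split; [|reflexivity]. split; auto.
    intro Hnear. apply Nx, HP, Hnear. left; reflexivity. }
  assert (Hinf' : infinite_set (fun V => exists g, A' g /\ V = P g)).
  { intro Hfam. destruct (finite_family_missing_points _ Hfam) as [pts Hpts].
    { intros V [g [Ag ->]]. apply Hmiss; auto. }
    destruct (Gamma_pt_almost_near f A pts e He HA) as [lb Hlb].
    destruct (infinite_set_not_in A' lb Hinf) as [g [Ag Hg]].
    destruct (Hpts (P g) (ex_intro _ g (conj Ag eq_refl))) as [x [Hx Nx]].
    apply Nx, HP. apply NNPP; intro Hfar.
    apply Hg, Hlb. split; [auto|intro Hnear; apply Hfar, Hnear, Hx]. }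
  split; [split|split]; auto.
  - intro x. apply member_containing; auto.
  - intros V [g [Ag ->]]. apply Hmiss; auto.
Qed.

Lemma Gamma_pt_zero_of_gamma_cover (W : (X -> Prop) -> Prop) (phi : (X -> Prop) -> X -> R) :
  gamma_cover W ->
  (forall Z, W Z -> continuous T (phi Z) /\ forall x, phi Z x = 0 <-> Z x) ->
  Gamma_pt T (fun _ => 0) (fun g => exists Z, W Z /\ g = phi Z).
Proof.
  intros [[_ Hproper] [Hinf Hfin]] Hphi.
  split; [|split; [|split]].
  - intros g [Z [HZ ->]]. apply Hphi, HZ.
  - intros Hfg. apply Hinf. apply (finite_set_image _ _ (fun g x => g x = 0) Hfg).
    intros Z HZ. exists (phi Z). split; [eauto|].
    apply pred_ext. intro x. symmetry. apply Hphi, HZ.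
  - intros [Z [HZ E]]. destruct (Hproper Z HZ) as [x Nx].
    apply Nx, Hphi; auto. rewrite <- E; reflexivity.
  - intros N HN.
    destruct (cp_nbhd_basic _ N (continuous_const T 0) HN) as [L [eps [Heps HNb]]].
    apply (finite_set_image (fun Z => exists x, In x L /\ (W Z /\ ~ Z x)) _ phi).
    + apply finite_set_union_list; intros x _; apply Hfin.
    + intros g [[Z [HZ ->]] Ng]. exists Z; split; auto.
      apply NNPP; intro Hall. apply Ng, HNb; [apply Hphi, HZ|].
      intros x Hx. apply NNPP; intro Hfar. apply Hall. exists x; repeat split; auto.
      intro Zx. apply Hfar. rewrite (proj2 (proj2 (Hphi Z HZ) x) Zx), Rminus_diag, Rabs_R0.
      exact Heps.
Qed.

Lemma Gamma_pt_of_pointwise_limit (f : X -> R) (b : nat -> X -> R) :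
  continuous T f -> (forall n, continuous T (b n)) -> (forall n, b n <> f) ->
  (forall x e, 0 < e -> exists N, forall n, (N <= n)%nat -> Rabs (b n x - f x) < e) ->
  Gamma_pt T f (fun g => exists n, g = b n).
Proof.
  intros Hf Hb Hne Hlim. split; [|split; [|split]].
  - intros g [n ->]; auto.
  - intros [l Hl].
    destruct (eventually_forall_in l (fun g n => b n <> g)) as [K HK].
    { intros g _. destruct (classic (g = f)) as [->|Hg].
      - exists 0%nat. intros n _; apply Hne.
      - assert (Hx : exists x, g x <> f x).
        { apply NNPP; intro Hall. apply Hg, functional_extensionality.
          intro x. apply NNPP; eauto. }
        destruct Hx as [x Hx].
        destruct (Hlim x (Rabs (g x - f x))) as [N HN]; [apply Rabs_pos_lt; lra|].
        exists N. intros n Hn E. specialize (HN n Hn). rewrite E in HN. lra. }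
    apply (HK (b K) K); [apply Hl; eauto|lia|reflexivity].
  - intros [n E]. apply (Hne n); auto.
  - intros N HN. destruct (cp_nbhd_basic f N Hf HN) as [L [eps [Heps HNb]]].
    destruct (eventually_forall_in L (fun x n => Rabs (b n x - f x) < eps)) as [K HK].
    { intros x _; apply Hlim, Heps. }
    apply (finite_set_image (fun k => In k (seq 0 K)) _ b); [exists (seq 0 K); auto|].
    intros g [[n ->] Ng]. exists n. split; [|reflexivity]. apply in_seq.
    destruct (Nat.lt_ge_cases n K) as [Hn|Hn]; [lia|]. exfalso.
    apply Ng, HNb; [apply Hb|]. intros x Hx. apply HK; auto.
Qed.

End CpNeighbourhoods.

Definition shrinking {X : Type} (T : topology X) (C : (X -> Prop) -> Prop)
    (F : (X -> Prop) -> X -> Prop) : Prop :=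
  (forall U, C U -> zero_set T (F U) /\ (forall x, F U x -> U x)) /\
  gamma_cover (fun Z => exists U, C U /\ Z = F U).

Lemma Gamma_F_sub {X : Type} (T : topology X) (C C' : (X -> Prop) -> Prop)
    (F : (X -> Prop) -> X -> Prop) :
  Gamma_F T C -> shrinking T C F -> (forall V, C' V -> C V) -> infinite_set C' ->
  (forall U V, C' U -> C' V -> F U = F V -> U = V) -> Gamma_F T C'.
Proof.
  intros [HC [Hcoz _]] [HF HFC] Hsub Hinf Hinj.
  split; [apply (gamma_cover_sub C); auto|split; [auto|]].
  exists F. split; [auto|].
  apply (gamma_cover_sub _ _ HFC); [intros Z [U [HU ->]]; eauto|].
  intro Hfin. apply Hinf.
  set (pre := fun Z => epsilon (inhabits Z) (fun U => C' U /\ Z = F U)).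
  apply (finite_set_image _ _ pre Hfin). intros U HU. exists (F U). split; [eauto|].
  assert (Hpre : C' (pre (F U)) /\ F U = F (pre (F U))) by (apply epsilon_spec; eauto).
  apply Hinj; tauto.
Qed.

Section DisjointRefinement.
Context {X : Type} (T : topology X).
Variable D : nat -> (X -> Prop) -> Prop.
Hypothesis HD : forall n, Gamma_F T (D n).

Definition shrink (n : nat) : (X -> Prop) -> X -> Prop :=
  epsilon (inhabits (fun U => U)) (shrinking T (D n)).

Lemma shrink_spec (n : nat) : shrinking T (D n) (shrink n).
Proof. unfold shrink; apply epsilon_spec, (HD n). Qed.

(* Stage [s] serves the cover [D (idx s)]; by the Cantor pairing every cover
   is served at infinitely many stages. *)
Definition idx (s : nat) : nat := fst (of_nat s).

Definition fresh (s : nat) (l : list (X -> Prop)) (V : X -> Prop) : Prop :=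
  D (idx s) V /\ ~ In (shrink (idx s) V) (map (shrink (idx s)) l).

Definition pick (s : nat) (l : list (X -> Prop)) : X -> Prop :=
  epsilon (inhabits (fun _ => True)) (fresh s l).

Lemma pick_spec (s : nat) (l : list (X -> Prop)) : fresh s l (pick s l).
Proof.
  unfold pick; apply epsilon_spec. destruct (shrink_spec (idx s)) as [_ [_ [Hinf _]]].
  destruct (infinite_set_not_in _ (map (shrink (idx s)) l) Hinf) as [Z [[U [HU ->]] NI]].
  exists U; split; auto.
Qed.

Fixpoint picked (s : nat) : list (X -> Prop) :=
  match s with O => nil | S s' => picked s' ++ pick s' (picked s') :: nil end.

Definition chosen (s : nat) : X -> Prop := pick s (picked s).

Lemma chosen_in_picked (t s : nat) : (t < s)%nat -> In (chosen t) (picked s).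
Proof.
  induction s as [|s IH]; intros H; [lia|]. simpl. apply in_or_app.
  destruct (Nat.eq_dec t s) as [->|N]; [right; left; reflexivity|left; apply IH; lia].
Qed.

Lemma chosen_separated (s t : nat) :
  shrink (idx s) (chosen s) = shrink (idx s) (chosen t) ->
  shrink (idx t) (chosen s) = shrink (idx t) (chosen t) -> s = t.
Proof.
  intros Es Et. destruct (Nat.lt_total s t) as [Hlt|[E|Hlt]]; auto; exfalso.
  - apply (proj2 (pick_spec t (picked t))). fold (chosen t). rewrite <- Et.
    apply in_map, chosen_in_picked, Hlt.
  - apply (proj2 (pick_spec s (picked s))). fold (chosen s). rewrite Es.
    apply in_map, chosen_in_picked, Hlt.
Qed.

Lemma chosen_inj (s t : nat) : chosen s = chosen t -> s = t.
Proof. intros E. apply chosen_separated; rewrite E; reflexivity. Qed.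

Definition refined (n : nat) (V : X -> Prop) : Prop := exists s, idx s = n /\ V = chosen s.

Lemma refined_sub (n : nat) (V : X -> Prop) : refined n V -> D n V.
Proof. intros [s [<- ->]]. apply (pick_spec s (picked s)). Qed.

Lemma refined_infinite (n : nat) : infinite_set (refined n).
Proof.
  apply (infinite_set_of_injective _ (fun k => chosen (to_nat (n, k)))).
  - intro k. exists (to_nat (n, k)). split; [|reflexivity].
    unfold idx. rewrite cancel_of_to. reflexivity.
  - intros k k' E. apply chosen_inj in E.
    apply (f_equal of_nat) in E. rewrite !cancel_of_to in E. congruence.
Qed.

Lemma Gamma_F_refined (n : nat) : Gamma_F T (refined n).
Proof.
  apply (Gamma_F_sub T (D n) (refined n) (shrink n) (HD n) (shrink_spec n)).
  - apply refined_sub.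
  - apply refined_infinite.
  - intros U V [s [Es ->]] [t [Et ->]] E. f_equal.
    apply chosen_separated; congruence.
Qed.

Lemma Gamma_F_disjoint_refinement : exists D0 : nat -> (X -> Prop) -> Prop,
  (forall n, Gamma_F T (D0 n)) /\ (forall n V, D0 n V -> D n V) /\
  (forall n m V, D0 n V -> D0 m V -> n = m).
Proof.
  exists refined. split; [apply Gamma_F_refined|split; [apply refined_sub|]].
  intros n m V [s [<- ->]] [t [<- E]]. apply chosen_inj in E. subst; reflexivity.
Qed.

End DisjointRefinement.

Lemma S1_GammaF_Gamma_eventually {X : Type} (T : topology X)
    (D : nat -> (X -> Prop) -> Prop) :
  S1_GammaF_Gamma T -> (forall n, Gamma_F T (D n)) ->
  exists U : nat -> X -> Prop, (forall n, D n (U n)) /\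
    forall x, exists N, forall n, (N <= n)%nat -> U n x.
Proof.
  intros HS1 HD.
  destruct (Gamma_F_disjoint_refinement T D HD) as [D0 [HD0 [Hsub Hdisj]]].
  destruct (HS1 D0 HD0) as [U [HU [Hgamma _]]].
  exists U. split; [intro n; apply Hsub, HU|].
  apply eventually_in_of_gamma_cover; [exact Hgamma|].
  intros n m E. apply (Hdisj n m (U n)); [apply HU|rewrite E; apply HU].
Qed.

Definition tube {X : Type} (f g : X -> R) (r : R) (x : X) : Prop := Rabs (g x - f x) < r.
Definition closed_tube {X : Type} (f g : X -> R) (r : R) (x : X) : Prop := Rabs (g x - f x) <= r.

Section TubeCover.
Context {X : Type} (T : topology X) (f : X -> R) (A : (X -> R) -> Prop) (r : R).
Hypothesis Hf : continuous T f.
Hypothesis Hr : 0 < r.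
Hypothesis HA : Gamma_pt T f A.
Hypothesis Hfar : forall g, A g -> exists x, ~ tube f g r x.

Definition tube_cover (V : X -> Prop) : Prop := exists g, A g /\ V = tube f g r.

Definition tube_center (V : X -> Prop) : X -> R :=
  epsilon (inhabits f) (fun g => A g /\ V = tube f g r).

Lemma tube_center_spec (V : X -> Prop) :
  tube_cover V -> A (tube_center V) /\ V = tube f (tube_center V) r.
Proof. intro H. unfold tube_center; apply epsilon_spec, H. Qed.

Lemma gamma_cover_tube_cover : gamma_cover tube_cover.
Proof. apply (gamma_cover_of_Gamma_pt T f A A _ r); auto. apply HA. Qed.

Lemma Gamma_F_tube_cover : Gamma_F T tube_cover.
Proof.
  assert (Hcont : forall g, A g -> continuous T (fun x => Rabs (g x - f x))).
  { intros g Ag. apply continuous_dist; [exact Hf|apply HA, Ag]. }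
  split; [apply gamma_cover_tube_cover|split].
  - intros V [g [Ag ->]]. apply cozero_set_lt, Hcont, Ag.
  - exists (fun V => closed_tube f (tube_center V) (r / 2)). split.
    + intros U HU. destruct (tube_center_spec U HU) as [Ac EU].
      split; [apply zero_set_le, Hcont, Ac|].
      intros x Hx. rewrite EU. unfold tube, closed_tube in *. lra.
    + set (centers := fun g => exists U, tube_cover U /\ g = tube_center U).
      replace (fun Z => exists U, tube_cover U /\ Z = closed_tube f (tube_center U) (r / 2))
        with (fun Z => exists g, centers g /\ Z = closed_tube f g (r / 2)).
      2:{ apply pred_ext; intro Z; split.
          - intros [g [[U [HU ->]] ->]]. eauto.
          - intros [U [HU ->]]. exists (tube_center U). split; [exists U|]; auto. }
      apply (gamma_cover_of_Gamma_pt T f A centers _ (r / 2)); [lra|exact HA| | | |].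
      * intros g x H. unfold closed_tube. lra.
      * intros g Ag. destruct (Hfar g Ag) as [x Nx].
        exists x. intro Hx. apply Nx. unfold tube, closed_tube in *. lra.
      * intros g [U [HU ->]]. apply tube_center_spec, HU.
      * destruct gamma_cover_tube_cover as [_ [Hinf _]].
        intro Hfin. apply Hinf.
        apply (finite_set_image centers _ (fun g => tube f g r) Hfin).
        intros U HU. exists (tube_center U). split; [exists U; auto|].
        apply tube_center_spec, HU.
Qed.

End TubeCover.

Lemma Cp_selection_of_S1_GammaF_Gamma {X : Type} (T : topology X) (f : X -> R)
    (A : nat -> (X -> R) -> Prop) :
  S1_GammaF_Gamma T -> continuous T f -> (forall n, Gamma_pt T f (A n)) ->
  exists b : nat -> X -> R, (forall n, A n (b n)) /\
    forall x, exists N, forall n, (N <= n)%nat -> Rabs (b n x - f x) < / INR (S n).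
Proof.
  intros HS1 Hf HA.
  set (r := fun n => / INR (S n)).
  assert (Hr : forall n, 0 < r n) by (intro n; apply Rinv_0_lt_compat, lt_0_INR; lia).
  set (uniform := fun n => exists g, A n g /\ forall x, tube f g (r n) x).
  destruct (classic (forall n, uniform n)) as [Hall|Hsome].
  - apply choice in Hall as [b Hb]. exists b. split; [apply Hb|].
    intro x. exists 0%nat. intros n _. apply Hb.
  - apply not_all_ex_not in Hsome as [n0 Hn0].
    assert (Hfar : forall n, ~ uniform n -> forall g, A n g -> exists x, ~ tube f g (r n) x).
    { intros n Hn g Ag. apply NNPP; intro Hno. apply Hn. exists g; split; auto.
      intro x. apply NNPP; eauto. }
    (* uniformly approximable indices borrow the cover of [n0] *)
    set (D := fun n V => (uniform n /\ tube_cover f (A n0) (r n0) V) \/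
                         (~ uniform n /\ tube_cover f (A n) (r n) V)).
    assert (HD : forall n, Gamma_F T (D n)).
    { intro n. destruct (classic (uniform n)) as [Hu|Hu].
      - replace (D n) with (tube_cover f (A n0) (r n0)) by (apply pred_ext; unfold D; tauto).
        apply Gamma_F_tube_cover; auto.
      - replace (D n) with (tube_cover f (A n) (r n)) by (apply pred_ext; unfold D; tauto).
        apply Gamma_F_tube_cover; auto. }
    destruct (S1_GammaF_Gamma_eventually T D HS1 HD) as [U [HU Hev]].
    assert (Hb : forall n, exists g, A n g /\ forall x, U n x -> tube f g (r n) x).
    { intro n. destruct (classic (uniform n)) as [[g [Ag Hg]]|Hu]; [exists g; auto|].
      destruct (HU n) as [[Hu' _]|[_ [g [Ag ->]]]]; [contradiction|eauto]. }
    apply choice in Hb as [b Hb]. exists b. split; [apply Hb|].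
    intro x. destruct (Hev x) as [N HN]. exists N. intros n Hn. apply (proj2 (Hb n)), HN, Hn.
Qed.

Lemma Cp_S1_of_S1_GammaF_Gamma {X : Type} (T : topology X) :
  S1_GammaF_Gamma T -> forall f : X -> R, continuous T f -> Cp_S1_Gamma_pt T f.
Proof.
  intros HS1 f Hf A HA.
  destruct (Cp_selection_of_S1_GammaF_Gamma T f A HS1 Hf HA) as [b [Hb Hrate]].
  exists b. split; [exact Hb|].
  apply Gamma_pt_of_pointwise_limit; [exact Hf| | |].
  - intro n. apply (HA n), Hb.
  - intros n E. apply (HA n). rewrite <- E. apply Hb.
  - intros x e He. destruct (Hrate x) as [N1 HN1].
    destruct (archimed_cor1 e He) as [N0 [HN0 HN0pos]].
    exists (Nat.max N1 N0). intros n Hn. specialize (HN1 n ltac:(lia)).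
    assert (/ INR (S n) <= / INR N0) by (apply Rinv_le_contravar; [apply lt_0_INR|apply le_INR]; lia).
    lra.
Qed.

Lemma separating_choice {X : Type} (T : topology X) (C : nat -> (X -> Prop) -> Prop)
    (F : nat -> (X -> Prop) -> X -> Prop) :
  (forall n, Gamma_F T (C n)) -> (forall n, shrinking T (C n) (F n)) ->
  exists w : nat * (X -> Prop) -> (X -> Prop) * (X -> R), forall n Z,
    (exists U, C n U /\ Z = F n U) ->
    C n (fst (w (n, Z))) /\ Z = F n (fst (w (n, Z))) /\
    separating T Z (fst (w (n, Z))) (snd (w (n, Z))).
Proof.
  intros HC HF.
  destruct (choice (fun nZ p => (exists U, C (fst nZ) U /\ snd nZ = F (fst nZ) U) ->
                      C (fst nZ) (fst p) /\ snd nZ = F (fst nZ) (fst p) /\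
                      separating T (snd nZ) (fst p) (snd p))) as [w Hw].
  - intros [n Z]. simpl. destruct (classic (exists U, C n U /\ Z = F n U)) as [[U [HU ->]]|Hno].
    + destruct (proj1 (HF n) U HU) as [Hzero Hsub].
      destruct (separating_exists T (F n U) U Hzero (proj1 (proj2 (HC n)) U HU) Hsub)
        as [h Hh].
      exists (U, h). auto.
    + exists (fun _ => True, fun _ => 0). tauto.
  - exists w. intros n Z. apply (Hw (n, Z)).
Qed.

Lemma S1_GammaF_Gamma_of_Cp_S1_Gamma_zero {X : Type} (T : topology X) :
  Cp_S1_Gamma_pt T (fun _ => 0) -> S1_GammaF_Gamma T.
Proof.
  intros HCp C HC.
  assert (HF : exists F : nat -> (X -> Prop) -> X -> Prop, forall n, shrinking T (C n) (F n)).
  { apply (choice (fun n => shrinking T (C n))). intro n. apply (HC n). }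
  destruct HF as [F HF].
  destruct (separating_choice T C F HC HF) as [w Hw].
  set (A := fun n g => exists Z, (exists U, C n U /\ Z = F n U) /\ g = snd (w (n, Z))).
  assert (HA : forall n, Gamma_pt T (fun _ => 0) (A n)).
  { intro n. apply Gamma_pt_zero_of_gamma_cover; [apply (HF n)|].
    intros Z HZ. destruct (Hw n Z HZ) as [_ [_ [Hh [Hzero _]]]]. auto. }
  destruct (HCp A HA) as [b [Hb Hbgamma]].
  assert (HbC : forall n, C n (fun x => b n x < 1)).
  { intro n. destruct (Hb n) as [Z [HZ ->]]. destruct (Hw n Z HZ) as [HU [_ [_ [_ Hlt]]]].
    rewrite (pred_ext _ _ Hlt). exact HU. }
  exists (fun n x => b n x < 1). split; [exact HbC|split].
  - replace (fun V => exists n, V = (fun x => b n x < 1))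
      with (fun V => exists g, (exists n, g = b n) /\ V = (fun x => g x < 1)).
    2:{ apply pred_ext; intro V; split; [intros [g [[n ->] ->]]|intros [n ->]]; eauto. }
    apply (gamma_cover_of_Gamma_pt T (fun _ => 0) (fun g => exists n, g = b n) _ _ 1);
      [lra|exact Hbgamma| | |auto|apply Hbgamma].
    + intros g x H. rewrite Rminus_0_r in H. pose proof (Rle_abs (g x)). lra.
    + intros g [n ->]. apply (proj2 (proj1 (proj1 (HC n)))), HbC.
  - intros V [n ->]. apply cozero_open, (proj1 (proj2 (HC n))), HbC.
Qed.

Theorem mainTheorem9 (X : Type) (T : topology X) (HT : tychonoff T) :
  (forall f : X -> R, continuous T f -> Cp_S1_Gamma_pt T f) <-> S1_GammaF_Gamma T.
Proof.
  split.
  - intros HCp. apply S1_GammaF_Gamma_of_Cp_S1_Gamma_zero, HCp, continuous_const.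
  - apply Cp_S1_of_S1_GammaF_Gamma.
Qed.
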